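(* Let $\alpha\in(0,1)$, $0\le\gamma\le 1/\alpha$, $n_0,n\in\mathbb N$ with $n_0\le n$. Let $\xi_1,\dots,\xi_{n_0}$ be i.i.d. random variables with values in $[0,1]$ and c.d.f. $F_\xi$ satisfying $F_\xi(t)=\gamma t$ for all $t\in[0,\alpha]$, and let $\xi_{n_0+1},\dots,\xi_n$ be random variables with values in $[0,1]$, independent of $(\xi_1,\dots,\xi_{n_0})$. For $c_i=i\alpha/n$, $i=1,\dots,n$, let $R'_n=\max\{k\le n:\xi_{k:n}\le c_k\}$ (with $R'_n=-\infty$ if this set is empty) and $V'_n=|\{i\in\{1,\dots,n_0\}:\xi_i\le c_{R'_n}\}|$, where $c_{-\infty}=-\infty$. Then \[ \mathbb E\Big(\frac{V'_n}{R'_n\vee 1}\Big)=\frac{n_0}{n}\gamma\alpha. \]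
   Context: $\xi_{1:n}\le\dots\le\xi_{n:n}$ denote the order statistics of $\xi_1,\dots,\xi_n$. *)

From HB Require Import structures.
From mathcomp Require Import all_boot all_order all_algebra.
From mathcomp Require Import all_classical all_reals all_analysis.
Set Implicit Arguments. Unset Strict Implicit. Unset Printing Implicit Defensive.
Import Order.TTheory GRing.Theory Num.Theory.
Local Open Scope classical_set_scope.
Local Open Scope ring_scope.

(* Indices 1..n of the paper are the ordinals 0..n-1 of 'I_n; the first block
   xi_1..xi_{n0} corresponds to the ordinals i with i < n0. *)

Definition ord_stat {R : realType} {n : nat} (x : 'I_n -> R) (k : nat) : R :=
  nth 0 (sort (fun a b : R => a <= b) [seq x i | i <- enum 'I_n]) k.-1.

Definition crit {R : realType} (n : nat) (alpha : R) (k : nat) : R :=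
  k%:R * alpha / n%:R.

(* R'_n = max{k <= n : x_{k:n} <= c_k}, None standing for -oo (empty set). *)
Definition Rprime {R : realType} {n : nat} (alpha : R) (x : 'I_n -> R) : option nat :=
  if has (fun k => ord_stat x k <= crit n alpha k) (iota 1 n)
  then Some (\big[maxn/0%N]_(k <- iota 1 n | ord_stat x k <= crit n alpha k) k)
  else None.

Definition crit_R {R : realType} (n : nat) (alpha : R) (r : option nat) : \bar R :=
  match r with None => -oo%E | Some k => (crit n alpha k)%:E end.

Definition Vprime {R : realType} {n : nat} (n0 : nat) (alpha : R) (x : 'I_n -> R) : nat :=
  #|[set i : 'I_n | (i < n0)%N && ((x i)%:E <= crit_R n alpha (Rprime alpha x))%E]|.

Definition Rvee1 (r : option nat) : nat :=
  match r with None => 1%N | Some k => maxn k 1 end.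

Definition fdp_ratio {R : realType} {n : nat} (n0 : nat) (alpha : R) (x : 'I_n -> R) : R :=
  (Vprime n0 alpha x)%:R / (Rvee1 (Rprime alpha x))%:R.

(* Mutual independence of the sigma-algebras sigma(xi_i), i < n0, and
   sigma(xi_j, j >= n0): product rule on the generating pi-system of
   (Borel) rectangles; taking B i = setT gives all subfamilies. *)
Definition block_indep {d} {T : measurableType d} {R : realType}
    (P : probability T R) (n n0 : nat) (X : 'I_n -> T -> R) : Prop :=
  forall B : 'I_n -> set R, (forall i, measurable (B i)) ->
    P (\bigcap_(i in [set: 'I_n]) (X i @^-1` B i)) =
    (\big[*%E/1%E]_(i < n | (i < n0)%N) P (X i @^-1` B i) *
     P (\bigcap_(i in [set i : 'I_n | (n0 <= i)%N]) (X i @^-1` B i)))%E.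

From HB Require Import structures.
From mathcomp Require Import all_boot all_order all_algebra.
From mathcomp Require Import all_classical all_reals all_analysis.
From mathcomp Require Import measurable_realfun.
From mathcomp.algebra_tactics Require Import ring.
Set Implicit Arguments.
Unset Strict Implicit.
Unset Printing Implicit Defensive.
Import Order.TTheory GRing.Theory Num.Theory.
Local Open Scope classical_set_scope.
Local Open Scope ring_scope.

(* Write V'_n/(R'_n v 1) as the sum over i <= n0 of 1{xi_i <= c_R'}/(R'_n v 1), and let
   R_i be the step-up index computed with xi_i replaced by 0.  If xi_i <= c_{R_i} then
   R'_n = R_i, and otherwise xi_i is not rejected, so each term equals
   1{xi_i <= c_{R_i}}/R_i.  As R_i only depends on the xi_j with j <> i, independence gives
   E[1{xi_i <= c_{R_i}}/R_i] = sum_k P(R_i = k) gamma c_k / k = gamma alpha / n.  The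
   independence hypothesis only speaks about rectangles, so {R_i = k} is split according
   to the finitely many patterns (1{xi_j <= c_k})_{k <= n} of the other coordinates. *)

Lemma sorted_nth_le_count d (T : orderType d) (x0 : T) (s : seq T) (c : T) k :
  sorted <=%O s -> (0 < k <= size s)%N ->
  (nth x0 s k.-1 <= c)%O = (k <= count (<= c)%O s)%N.
Proof.
elim: s k => [|a s IH] k; first by case: k => [|[]].
move=> s_sorted /andP[k_gt0 k_le].
have a_min : all (>= a)%O s by apply: order_path_min => //; exact: le_trans.
have s_above : ~~ (a <= c)%O -> count (<= c)%O s = 0%N.
  move=> a_gt_c; apply/eqP; rewrite -leqn0 leqNgt -has_count; apply/hasPn => y ys.
  by apply: contra a_gt_c; apply: le_trans; move/allP: a_min; apply.
case: k k_gt0 k_le => [//|[|k]] _ k_le /=.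
  by case: (boolP (a <= c)%O) => // /s_above ->.
rewrite (IH k.+1) ?(path_sorted s_sorted) //.
by case: (boolP (a <= c)%O) => [_|/s_above ->]; rewrite ?add1n.
Qed.

Lemma count_enum_cards (T : finType) (P : pred T) :
  count P (enum T) = #|[set x | P x]%SET|.
Proof. by rewrite cardsE cardE -size_filter enumT. Qed.

Lemma ord_stat_le_card (R : realType) n (x : 'I_n -> R) (c : R) k :
  (0 < k <= n)%N -> (ord_stat x k <= c) = (k <= #|[set j | (x j <= c)%R]%SET|)%N.
Proof.
move=> k_range; rewrite /ord_stat sorted_nth_le_count.
- by rewrite count_sort count_map count_enum_cards.
- exact: (sort_sorted (@le_total _ R)).
- by rewrite size_sort size_map size_enum_ord.
Qed.

Lemma bigmax_cond_mem [s : seq nat] [P : pred nat] :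
  has P s -> P (\max_(k <- s | P k) k) && (\max_(k <- s | P k) k \in s).
Proof.
elim: s => //= a s IH; rewrite big_cons /= inE.
case: (boolP (has P s)) => [/IH/andP[P_max max_s]|hasNP]; case: ifP => Pa //= _.
- by case: leqP; rewrite ?P_max ?max_s ?orbT ?Pa ?eqxx.
- by rewrite P_max max_s orbT.
- by rewrite big_hasC // maxn0 Pa eqxx.
Qed.

Definition stepup (n : nat) (P : pred nat) : option nat :=
  if has P (iota 1 n) then Some (\max_(k <- iota 1 n | P k) k) else None.

Lemma eq_in_stepup n (P Q : pred nat) :
  {in iota 1 n, P =1 Q} -> stepup n P = stepup n Q.
Proof.
move=> eqPQ; rewrite /stepup (eq_in_has eqPQ) (big_seq_cond P) (big_seq_cond Q).
by congr (if _ then Some _ else _); apply: eq_bigl => k; case: (boolP (k \in _)) => // /eqPQ ->.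
Qed.

Lemma stepup_SomeP n (P : pred nat) k0 :
  stepup n P = Some k0 <->
  [/\ P k0, (0 < k0 <= n)%N & forall k, (0 < k <= n)%N -> P k -> (k <= k0)%N].
Proof.
have iotaE k : (k \in iota 1 n) = (0 < k <= n)%N by rewrite mem_iota add1n ltnS.
rewrite /stepup; split.
  case: ifP => // P_sat [<-]; have /andP[-> max_iota] := bigmax_cond_mem P_sat.
  split=> // [|k k_range Pk]; first by rewrite -iotaE.
  by apply: leq_bigmax_seq; rewrite ?iotaE.
case=> Pk0 k0_range k0_max; have k0_iota : k0 \in iota 1 n by rewrite iotaE.
rewrite ifT; last by apply/hasP; exists k0.
congr Some; apply/eqP; rewrite eqn_leq leq_bigmax_seq // andbT.
by apply/bigmax_leqP_seq => k; rewrite iotaE; apply: k0_max.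
Qed.

Lemma stepup_Some n (P : pred nat) k : (0 < k <= n)%N -> P k ->
  exists k0, stepup n P = Some k0.
Proof.
move=> k_range Pk; rewrite /stepup ifT; first by eexists.
by apply/hasP; exists k; rewrite // mem_iota add1n ltnS.
Qed.

Lemma stepup_leave_one_out n (f : nat -> nat) (b : pred nat) k0 :
  (forall k k', (k <= k')%N -> b k -> b k') ->
  stepup n (fun k => k <= f k + ~~ b k)%N = Some k0 ->
  (if stepup n (fun k => k <= f k)%N is Some r then b r else false) = b k0 /\
  (b k0 -> stepup n (fun k => k <= f k)%N = Some k0).
Proof.
move=> b_homo /stepup_SomeP[Pk0 k0_range k0_max].
have le_f k : (k <= f k -> k <= f k + ~~ b k)%N by move/leq_trans; apply; rewrite leq_addr.
have stepup_f : b k0 -> stepup n (fun k => k <= f k)%N = Some k0.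
  move=> bk0; apply/stepup_SomeP; split=> // [|k k_range /le_f]; last exact: k0_max.
  by rewrite bk0 addn0 in Pk0.
split=> //; case: (boolP (b k0)) => [/stepup_f -> //|bNk0].
case E: stepup => [r|] //; move/stepup_SomeP: E => [Pr r_range _].
by apply/negbTE; apply: contra bNk0; apply: b_homo; apply: k0_max (le_f _ Pr).
Qed.

Section step_up_procedure.
Variables (R : realType) (n : nat) (alpha : R).
Hypothesis alpha_ge0 : 0 <= alpha.

Lemma crit_homo : {homo crit n alpha : k k' / (k <= k')%N >-> k <= k'}.
Proof.
by move=> k k' le_kk'; rewrite /crit ler_wpM2r ?invr_ge0 // ler_wpM2r // ler_nat.
Qed.

Lemma crit_ge0 k : 0 <= crit n alpha k.
Proof. by rewrite /crit mulr_ge0 ?invr_ge0 // mulr_ge0. Qed.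

Lemma crit_le k : (k <= n)%N -> crit n alpha k <= alpha.
Proof.
move=> le_kn; have [->|n_gt0] := posnP n; first by rewrite /crit invr0 mulr0.
by rewrite /crit ler_pdivrMr ?ltr0n // mulrC ler_wpM2l // ler_nat.
Qed.

Definition rejected (x : 'I_n -> R) (i : 'I_n) : bool :=
  ((x i)%:E <= crit_R n alpha (Rprime alpha x))%E.

Lemma fdp_ratio_sum n0 (x : 'I_n -> R) : fdp_ratio n0 alpha x =
  \sum_(i < n | (i < n0)%N) (rejected x i)%:R / (Rvee1 (Rprime alpha x))%:R.
Proof.
rewrite /fdp_ratio /Vprime -mulr_suml -natr_sum; congr (_%:R / _).
rewrite -sum1_card big_mkcond [RHS]big_mkcond /=; apply: eq_bigr => i _.
by rewrite /in_mem /= /in_set /= asboolb; case: (i < n0)%N.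
Qed.

Lemma Rprime_stepup (x : 'I_n -> R) :
  Rprime alpha x = stepup n (fun k => k <= #|[set j | (x j <= crit n alpha k)%R]%SET|)%N.
Proof.
apply: eq_in_stepup => k; rewrite mem_iota add1n ltnS => k_range.
exact: ord_stat_le_card.
Qed.

Definition stepup_loo (x : 'I_n -> R) (i : 'I_n) : option nat :=
  stepup n (fun k => k <= #|i |: [set j | (x j <= crit n alpha k)%R]%SET|)%N.

Lemma rejected_ratio_loo [x : 'I_n -> R] [i k0] : stepup_loo x i = Some k0 ->
  (rejected x i)%:R / (Rvee1 (Rprime alpha x))%:R =
  (x i <= crit n alpha k0)%R%:R / k0%:R :> R.
Proof.
rewrite /stepup_loo; under eq_in_stepup => k _ do rewrite cardsU1 inE addnC.
have b_homo k k' : (k <= k')%N -> x i <= crit n alpha k -> x i <= crit n alpha k'.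
  by move/crit_homo/[swap]/le_trans; apply.
move=> /(@stepup_leave_one_out _ _ _ _ b_homo)[rej_loo loo_rej].
have -> : rejected x i = (x i <= crit n alpha k0).
  rewrite /rejected Rprime_stepup -rej_loo.
  by case: stepup => [r|] /=; rewrite ?lee_fin // leNgt ltNyr.
case: (boolP (x i <= crit n alpha k0)) => [/loo_rej|_]; last by rewrite !mul0r.
move=> /[dup] /stepup_SomeP[_ /andP[k0_gt0 _] _].
by rewrite Rprime_stepup => -> /=; rewrite (maxn_idPl k0_gt0).
Qed.

Lemma stepup_loo_Some (x : 'I_n -> R) i : exists k0, stepup_loo x i = Some k0.
Proof.
apply: (@stepup_Some _ _ 1); last by apply/card_gt0P; exists i; rewrite setU11.
by rewrite /= (leq_ltn_trans _ (ltn_ord i)).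
Qed.

(* A profile records the pattern of every coordinate; putting [ffun => true] at i
   encodes xi_i replaced by 0, which lies below every critical value. *)
Definition pattern (y : R) : {ffun 'I_n.+1 -> bool} :=
  [ffun k : 'I_n.+1 => y <= crit n alpha k].

Local Notation profile := {ffun 'I_n -> {ffun 'I_n.+1 -> bool}}.

Definition stepup_profile (v : profile) : option nat :=
  stepup n (fun k => k <= #|[set j | v j (inord k)]%SET|)%N.

Definition loo_profile (x : 'I_n -> R) (i : 'I_n) : profile :=
  [ffun j => if j == i then [ffun => true] else pattern (x j)].

Definition matches (x : 'I_n -> R) (i : 'I_n) (v : profile) : bool :=
  [forall j, (j != i) ==> (v j == pattern (x j))].

Lemma stepup_loo_profile (x : 'I_n -> R) i :
  stepup_profile (loo_profile x i) = stepup_loo x i.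
Proof.
apply: eq_in_stepup => k; rewrite mem_iota add1n ltnS => /andP[_ le_kn] /=.
congr (_ <= _)%N; apply: eq_card => j; rewrite !inE ffunE.
by case: (j == i); rewrite ?ffunE ?inordK.
Qed.

Lemma matches_loo (x : 'I_n -> R) i (v : profile) :
  (v i == [ffun => true]) && matches x i v = (v == loo_profile x i).
Proof.
rewrite /matches; apply/andP/eqP => [[/eqP vi /forallP v_others]|->]; last first.
  split; first by rewrite ffunE !eqxx.
  by apply/forallP => j; rewrite ffunE; case: eqP => //= _; exact: eqxx.
apply/ffunP => j; rewrite ffunE; case: eqP => [->//|/eqP j_neq_i].
by apply/eqP; exact: implyP (v_others j) j_neq_i.
Qed.

Definition loo_weight (i : 'I_n) (k : 'I_n.+1) (v : profile) : R :=
  ((v i == [ffun => true]) && (stepup_profile v == Some (k : nat)))%:R / k%:R.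

Lemma rejected_ratio_profiles (x : 'I_n -> R) i :
  (rejected x i)%:R / (Rvee1 (Rprime alpha x))%:R =
  \sum_(k < n.+1) \sum_(v : profile)
     loo_weight i k v * ((x i <= crit n alpha k) && matches x i v)%:R.
Proof.
have sum_profiles (k : 'I_n.+1) :
    \sum_(v : profile) loo_weight i k v * ((x i <= crit n alpha k) && matches x i v)%:R =
    ((stepup_loo x i == Some (k : nat)) && (x i <= crit n alpha k))%:R / k%:R.
  rewrite (bigD1 (loo_profile x i)) //= big1 ?addr0; last first.
    move=> v /negbTE v_neq; have := matches_loo x i v; rewrite v_neq /loo_weight.
    by case: (v i == _); case: (matches x i v); rewrite ?andbF ?mul0r ?mulr0.
  have /andP[loo_i loo_matches] := etrans (matches_loo x i _) (eqxx (loo_profile x i)).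
  by rewrite /loo_weight loo_i loo_matches stepup_loo_profile andbT mulrAC -natrM mulnb andbC.
under eq_bigr do rewrite sum_profiles.
have [k0 loo_k0] := stepup_loo_Some x i.
have /stepup_SomeP[_ /andP[_ k0_le] _] := loo_k0.
rewrite (rejected_ratio_loo loo_k0) (bigD1 (Ordinal (k0_le : k0 < n.+1)%N)) //=.
rewrite loo_k0 eqxx big1 ?addr0 // => k k_neq.
suff /negbTE -> : Some k0 != Some (k : nat) by rewrite mul0r.
by apply: contra k_neq => /eqP[k0E]; apply/eqP/val_inj.
Qed.

Lemma sum_loo_weight_crit i (v : profile) :
  \sum_(k < n.+1) loo_weight i k v * crit n alpha k =
  (v i == [ffun => true])%:R * (alpha / n%:R).
Proof.
have [vi|/negbTE vNi] := boolP (v i == [ffun => true]); last first.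
  by rewrite mul0r big1 // => k _; rewrite /loo_weight vNi !mul0r.
have n_gt0 : (0 < n)%N by rewrite (leq_ltn_trans _ (ltn_ord i)).
have [k0 v_k0] : exists k0, stepup_profile v = Some k0.
  apply: (@stepup_Some _ _ 1); first by rewrite leqnn n_gt0.
  by apply/card_gt0P; exists i; rewrite inE (eqP vi) ffunE.
have /stepup_SomeP[_ /andP[k0_gt0 k0_le] _] := v_k0.
rewrite (bigD1 (Ordinal (k0_le : k0 < n.+1)%N)) //= big1 ?addr0 => [|k k_neq].
  rewrite /loo_weight vi v_k0 eqxx /crit /= mul1r mul1r.
  by field; rewrite !pnatr_eq0 -!lt0n k0_gt0 n_gt0.
rewrite /loo_weight v_k0; suff /negbTE -> : Some k0 != Some (k : nat) by rewrite andbF !mul0r.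
by apply: contra k_neq => /eqP[k0E]; apply/eqP/val_inj.
Qed.
End step_up_procedure.

Section expectation_and_independence.
Variables (d : measure_display) (T : measurableType d) (R : realType).
Variable P : probability T R.

Lemma Lfun_indic (A : set T) : measurable A -> \1_A \in Lfun P 1.
Proof. by move=> mA; apply/Lfun1_integrable; exact: integrable_indic. Qed.

Lemma expectation_sum_indic (I : finType) (p : pred I) (a : I -> R) (A : I -> set T) :
  (forall t, measurable (A t)) ->
  ('E_P[fun w => (\sum_(t | p t) a t * \1_(A t) w)%R] =
   (\sum_(t | p t) a t * fine (P (A t)))%:E)%E.
Proof.
move=> mA; pose X := [seq a t \o* \1_(A t) | t <- [seq t <- index_enum I | p t]].
have -> : (fun w => \sum_(t | p t) a t * \1_(A t) w) = \sum_(f <- X) f.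
  rewrite sumrfctE; apply: funext => w; rewrite big_map big_filter.
  by apply: eq_bigr => t _; rewrite mulrC.
rewrite expectation_sum; last first.
  by move=> f /mapP[t _ ->]; apply: Lfun_scale => //; exact: Lfun_indic.
rewrite big_map big_filter -sumEFin; apply: eq_bigr => t _.
by rewrite expectationZl ?Lfun_indic // expectation_indic // EFinM fineK // fin_num_measure.
Qed.

Lemma block_indep_loo n n0 (X : 'I_n -> T -> R) (B : 'I_n -> set R) (i : 'I_n) :
  block_indep P n0 X -> (forall j, measurable (B j)) -> (i < n0)%N ->
  P (\bigcap_(j in [set: 'I_n]) (X j @^-1` B j)) =
  (P (X i @^-1` B i) *
   P (\bigcap_(j in [set: 'I_n]) (X j @^-1` (if j == i then setT else B j))))%E.
Proof.
move=> X_indep mB lt_i_n0; pose Bi j := if j == i then setT else B j.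
have mBi j : measurable (Bi j) by rewrite /Bi; case: (j == i).
rewrite (X_indep B mB) (X_indep Bi mBi) (bigD1 i) //= [in RHS](bigD1 i) //= /Bi eqxx.
rewrite preimage_setT probability_setT mul1e muleA; congr (_ * _ * P _)%E.
  by apply: eq_bigr => j /andP[_ /negbTE ->].
apply: eq_bigcapr => j /= le_n0_j; rewrite ifF //; apply/negbTE.
by apply: contraTneq le_n0_j => ->; rewrite -ltnNge.
Qed.
End expectation_and_independence.

Lemma measurable_preimage_ler (R : realType) (c : R) (b : set bool) :
  measurable ((fun y : R => y <= c) @^-1` b).
Proof.
rewrite -[_ @^-1` _]setTI.
by apply: measurable_fun_ler => //; exact: measurable_cst.
Qed.

Lemma measurable_set_ler (R : realType) (c : R) : measurable [set y : R | y <= c].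
Proof. exact: (measurable_preimage_ler c [set true]). Qed.

Lemma measurable_pattern_eq (R : realType) n (alpha : R) (u : {ffun 'I_n.+1 -> bool}) :
  measurable [set y : R | pattern n alpha y = u].
Proof.
have -> : [set y : R | pattern n alpha y = u] =
    \bigcap_(k in [set: 'I_n.+1]) ((fun y => y <= crit n alpha k) @^-1` [set u k]).
  apply/seteqP; split=> [y <- k _|y yu]; first by rewrite /= ffunE.
  by apply/ffunP => k; rewrite ffunE; exact: yu.
apply: fin_bigcap_measurable; first exact: finite_finset.
by move=> k _; exact: measurable_preimage_ler.
Qed.

Section fdp_expectation.
Variables (d : measure_display) (T : measurableType d) (R : realType).
Variables (P : probability T R) (alpha gamma : R) (n0 n : nat).
Variables (xi : 'I_n -> T -> R) (F : R -> R).
Hypotheses (alpha_ge0 : 0 <= alpha) (xi_meas : forall i, measurable_fun setT (xi i)).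
Hypothesis xi_cdf : forall i : 'I_n, (i < n0)%N -> forall t : R,
  P [set w | xi i w <= t] = (F t)%:E.
Hypothesis F_uniform : forall t : R, 0 <= t <= alpha -> F t = gamma * t.
Hypothesis xi_indep : block_indep P n0 xi.

Local Notation profile := {ffun 'I_n -> {ffun 'I_n.+1 -> bool}}.

Definition loo_event (i : 'I_n) (Bi : set R) (v : profile) : set T :=
  \bigcap_(j in [set: 'I_n])
    (xi j @^-1` (if j == i then Bi else [set y | pattern n alpha y = v j])).

Lemma measurable_loo_event i Bi v : measurable Bi -> measurable (loo_event i Bi v).
Proof.
move=> mBi; apply: fin_bigcap_measurable; first exact: finite_finset.
move=> j _; rewrite -[_ @^-1` _]setTI; apply: xi_meas => //.
by case: (j == i) => //; exact: measurable_pattern_eq.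
Qed.

Lemma in_loo_event i Bi v w : (w \in loo_event i Bi v) =
  (xi i w \in Bi) && matches alpha (fun j => xi j w) i v.
Proof.
apply/idP/andP => [/set_mem w_in|[/set_mem w_i /forallP w_others]].
  split; first by have := w_in i I; rewrite /preimage /= eqxx => /mem_set.
  apply/forallP => j; apply/implyP => /negbTE j_neq_i.
  by have := w_in j I; rewrite /preimage /= j_neq_i => ->.
apply/mem_set => j _; rewrite /preimage /=; case: eqP => [->//|/eqP j_neq_i].
by apply/esym/eqP; exact: implyP (w_others j) j_neq_i.
Qed.

Lemma probability_loo_event_le (i : 'I_n) k (v : profile) : (i < n0)%N -> (k <= n)%N ->
  fine (P (loo_event i [set y | y <= crit n alpha k] v)) =
  gamma * crit n alpha k * fine (P (loo_event i setT v)).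
Proof.
move=> lt_i_n0 le_kn.
have mB j : measurable (if j == i then [set y : R | y <= crit n alpha k]
                        else [set y | pattern n alpha y = v j]).
  by case: (j == i); [exact: measurable_set_ler|exact: measurable_pattern_eq].
rewrite /loo_event (block_indep_loo xi_indep mB lt_i_n0) eqxx.
have -> : \bigcap_(j in [set: 'I_n]) (xi j @^-1` (if j == i then setT else
    if j == i then [set y | y <= crit n alpha k] else [set y | pattern n alpha y = v j])) =
    loo_event i setT v by apply: eq_bigcapr => j _; case: (j == i).
have -> : xi i @^-1` [set y | y <= crit n alpha k] = [set w | xi i w <= crit n alpha k] by [].
rewrite xi_cdf // F_uniform ?crit_ge0 ?crit_le //.
have mC : measurable (loo_event i setT v) by exact: measurable_loo_event.
by rewrite -[in LHS](fineK (fin_num_measure _ _ mC)) -EFinM.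
Qed.

Lemma indic_loo_event i Bi v w :
  \1_(loo_event i Bi v) w = ((xi i w \in Bi) && matches alpha (fun j => xi j w) i v)%:R :> R.
Proof. by rewrite indicE in_loo_event. Qed.

Lemma sum_probability_loo_event (i : 'I_n) :
  \sum_(v : profile) (v i == [ffun => true])%:R * fine (P (loo_event i setT v)) = 1.
Proof.
have mC (v : profile) : measurable (loo_event i setT v) by exact: measurable_loo_event.
have := expectation_sum_indic P xpredT (fun v : profile => (v i == [ffun => true])%:R) mC.
have -> : (fun w => \sum_(v : profile) (v i == [ffun => true])%:R * \1_(loo_event i setT v) w)
    = cst (1 : R).
  apply: funext => w; rewrite (bigD1 (loo_profile alpha (fun j => xi j w) i)) //= big1 ?addr0.
    by rewrite indic_loo_event in_setT -natrM mulnb matches_loo eqxx.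
  by move=> v v_neq; rewrite indic_loo_event in_setT -natrM mulnb matches_loo (negbTE v_neq).
by rewrite expectation_cst => -[].
Qed.

Lemma sum_weighted_loo_events (i : 'I_n) : (i < n0)%N ->
  \sum_(k < n.+1) \sum_(v : profile)
     loo_weight R i k v * fine (P (loo_event i [set y | y <= crit n alpha k] v)) =
  gamma * alpha / n%:R.
Proof.
move=> lt_i_n0; rewrite exchange_big /=.
transitivity (\sum_(v : profile) (\sum_(k < n.+1) loo_weight R i k v * crit n alpha k) *
                                 (gamma * fine (P (loo_event i setT v)))).
  apply: eq_bigr => v _; rewrite mulr_suml; apply: eq_bigr => k _.
  by rewrite probability_loo_event_le //; [ring|exact: ltn_ord k].
rewrite -[RHS]mulr1 -[X in _ * X](sum_probability_loo_event i) mulr_sumr.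
by apply: eq_bigr => v _; rewrite sum_loo_weight_crit; ring.
Qed.

Lemma expectation_fdp_ratio :
  ('E_P[fun w => fdp_ratio n0 alpha (fun i => xi i w)] =
   (\sum_(i < n | (i < n0)%N) \sum_(k < n.+1) \sum_(v : profile)
      loo_weight R i k v * fine (P (loo_event i [set y | y <= crit n alpha k] v)))%:E)%E.
Proof.
pose A (t : 'I_n * ('I_n.+1 * profile)) :=
  loo_event t.1 [set y | y <= crit n alpha t.2.1] t.2.2.
have mA t : measurable (A t).
  by apply: measurable_loo_event; exact: measurable_set_ler.
have -> : (fun w => fdp_ratio n0 alpha (fun i => xi i w)) =
    (fun w => \sum_(t : 'I_n * ('I_n.+1 * profile) | (t.1 < n0)%N && true)
       loo_weight R t.1 t.2.1 t.2.2 * \1_(A t) w).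
  apply: funext => w; rewrite fdp_ratio_sum.
  under eq_bigr => i _ do rewrite (rejected_ratio_profiles alpha_ge0) pair_bigA.
  by rewrite pair_big_dep; apply: eq_bigr => -[i [k v]] _; rewrite indic_loo_event mem_setE.
rewrite expectation_sum_indic //; congr EFin.
by under [RHS]eq_bigr => i _ do rewrite pair_bigA; rewrite pair_big_dep.
Qed.
End fdp_expectation.

Theorem lemma2p2 (d : measure_display) (T : measurableType d) (R : realType)
  (P : probability T R) (alpha gamma : R) (n0 n : nat)
  (xi : 'I_n -> T -> R) (F : R -> R) :
  0 < alpha < 1 ->
  0 <= gamma <= alpha^-1 ->
  (n0 <= n)%N ->
  (forall i, measurable_fun setT (xi i)) ->
  (forall i w, 0 <= xi i w <= 1) ->
  (forall i : 'I_n, (i < n0)%N -> forall t : R,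
     P [set w | xi i w <= t] = (F t)%:E) ->
  (forall t : R, 0 <= t <= alpha -> F t = gamma * t) ->
  block_indep P n0 xi ->
  ('E_P[fun w => fdp_ratio n0 alpha (fun i => xi i w)] =
     (n0%:R / n%:R * gamma * alpha)%:E)%E.
Proof.
move=> /andP[/ltW alpha_ge0 _] _ le_n0_n xi_meas _ xi_cdf F_uniform xi_indep.
rewrite (expectation_fdp_ratio P n0 alpha_ge0 xi_meas); congr EFin.
under eq_bigr => i lt_i_n0 do
  rewrite (sum_weighted_loo_events alpha_ge0 xi_meas xi_cdf F_uniform xi_indep lt_i_n0).
by rewrite (big_ord_narrow le_n0_n) sumr_const card_ord -mulr_natl; ring.
Qed.
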